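(* Let $X=(x_1,\dots,x_n)\in(\mathbb{Z}_{12})^n$ have $n$ pairwise distinct entries. Let $G$ be a subgroup of the group $\mathrm{Aff}^*(\mathbb{Z}_{12})$ of invertible affine maps $\mathbb{Z}_{12}\to\mathbb{Z}_{12}$, acting componentwise on $(\mathbb{Z}_{12})^n$, and assume $f\{x_1,\dots,x_n\}\neq\{x_1,\dots,x_n\}$ for every non-identity $f\in G$. Let $\Sigma_n$ act on $(\mathbb{Z}_{12})^n$ by $\sigma(y_1,\dots,y_n)=(y_{\sigma^{-1}(1)},\dots,y_{\sigma^{-1}(n)})$. Let $\Sigma_nG$ be the subgroup of $\mathrm{Sym}((\mathbb{Z}_{12})^n)$ generated by $\Sigma_n$ and $G$ (an internal direct product, each element written uniquely as $\sigma g$ with $\sigma\in\Sigma_n$, $g\in G$), and let $\lambda(\Sigma_nG)$ be the subgroup of $\mathrm{Sym}(\Sigma_nGX)$ given by the action of $\Sigma_nG$ on the orbit $\Sigma_nGX$. Let $\rho(\Sigma_nG)\subseteq\mathrm{Sym}(\Sigma_nGX)$ consist of the maps $\rho(\nu h)$, $\nu\in\Sigma_n$, $h\in G$, defined by $$\rho(\nu h)\,\sigma g X:=\sigma g(\nu h)^{-1}X\quad(\sigma\in\Sigma_n,\ g\in G),$$ and let $\rho(\Sigma_n)=\{\rho(\nu):\nu\in\Sigma_n\}$, $\rho(G)=\{\rho(h):h\in G\}$, with $\lambda(\Sigma_n)$, $\lambda(G)$ defined analogously from the left actions. Then: (i) the restriction of $\rho(\Sigma_n)$ to $\Sigma_nX$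 is the dual group of $\lambda(\Sigma_n)$ in $\mathrm{Sym}(\Sigma_nX)$, and the restriction of $\rho(G)$ to $GX$ is the dual group of $\lambda(G)$ in $\mathrm{Sym}(GX)$; (ii) the subgroups $\rho(\Sigma_n)$ and $\rho(G)$ of $\mathrm{Sym}(\Sigma_nGX)$ commute, i.e. $\rho(\nu)\rho(h)=\rho(h)\rho(\nu)$ for all $\nu\in\Sigma_n$, $h\in G$; (iii) $\rho(\Sigma_nG)$ is the internal direct product of $\rho(\Sigma_n)$ and $\rho(G)$; (iv) if $Y\in\sigma GX$ (for some $\sigma\in\Sigma_n$) and $h\in G$, then $\rho(h)Y=\sigma\rho(h)\sigma^{-1}Y$.
   Context: $\mathrm{Sym}(S)$ denotes the group of all bijections of a set $S$. An invertible affine map of $\mathbb{Z}_{12}$ is $k\mapsto ak+b$ with $a$ a unit of $\mathbb{Z}_{12}$; it acts on $n$-tuples componentwise, and these maps commute with the permutation action of $\Sigma_n$. The dual group of a subgroup $A\le\mathrm{Sym}(S)$ acting simply transitively is the subgroup $B$ such that $A,B$ both act simply transitively and each is the centralizer of the other in $\mathrm{Sym}(S)$. A group $H$ is the internal direct product of subgroups $K,L$ if $K$ and $L$ commute, $K\cap L=\{e\}$, and every element of $H$ is $k\ell$ with $k\in K$, $\ell\in L$. *)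

From mathcomp Require Import all_boot all_fingroup all_algebra.
Set Implicit Arguments.
Unset Strict Implicit.
Unset Printing Implicit Defensive.
Import GRing.Theory.
Local Open Scope group_scope.

Definition tup (n : nat) : finType := {ffun 'I_n -> 'Z_12}.

Definition Aff : {set {perm 'Z_12}} :=
  [set f : {perm 'Z_12} | [exists a : 'Z_12, exists b : 'Z_12,
     (a \is a GRing.unit) && [forall k : 'Z_12, f k == (a * k + b)%R]]].

Definition sigma_fun n (s : 'S_n) (y : tup n) : tup n := [ffun i => y (s^-1 i)].
Lemma sigma_fun_inj n (s : 'S_n) : injective (sigma_fun s).
Proof.
apply: (can_inj (g := sigma_fun s^-1)) => y; apply/ffunP => i.
by rewrite !ffunE invgK permK.
Qed.
Definition sigma_act n (s : 'S_n) : {perm tup n} := perm (@sigma_fun_inj n s).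

Definition aff_fun n (f : {perm 'Z_12}) (y : tup n) : tup n := [ffun i => f (y i)].
Lemma aff_fun_inj n (f : {perm 'Z_12}) : injective (@aff_fun n f).
Proof.
apply: (can_inj (g := @aff_fun n f^-1)) => y; apply/ffunP => i.
by rewrite !ffunE permK.
Qed.
Definition aff_act n (f : {perm 'Z_12}) : {perm tup n} := perm (@aff_fun_inj n f).

Definition SigmaS n : {set {perm tup n}} := [set sigma_act s | s : 'S_n].
Definition Gt n (G : {set {perm 'Z_12}}) : {set {perm tup n}} := [set aff_act n f | f in G].
Definition SigmaG n (G : {set {perm 'Z_12}}) : {set {perm tup n}} :=
  <<SigmaS n :|: Gt n G>>.

Definition orbitX (T : finType) (A : {set {perm T}}) (X : T) : {set T} :=
  [set (p : {perm T}) X | p in A].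

(* rho(p) (q X) := q (p^-1 X) for q in Sigma_n G (function application order:
   q (p^-1 X) is  sigma g (nu h)^-1 X  when q = sigma g, p = nu h);
   identity outside the orbit Sigma_n G X. *)
Definition rho_fun n (G : {set {perm 'Z_12}}) (X : tup n) (p : {perm tup n})
  (y : tup n) : tup n :=
  if [pick q in SigmaG n G | q X == y] is Some q then q (p^-1 X) else y.

(* the corresponding permutation (the theorem also asserts rho_fun is injective,
   so the fallback value 1 is never used for p in Sigma_n G) *)
Definition rho n (G : {set {perm 'Z_12}}) (X : tup n) (p : {perm tup n})
  : {perm tup n} :=
  match injectiveP (rho_fun G X p) with
  | ReflectT inj => perm inj
  | ReflectF _ => 1
  end.

Definition simply_transitive (T : finType) (S : {set T}) (A : {set {perm T}}) :=
  forall x y, x \in S -> y \in S -> exists! a, a \in A /\ a x = y.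

Definition dual_group (T : finType) (S : {set T}) (A B : {set {perm T}}) :=
  [/\ A \subset Sym S, B \subset Sym S,
      simply_transitive S A, simply_transitive S B &
      'C_(Sym S)(A) = B /\ 'C_(Sym S)(B) = A].

Definition int_dprod (gT : finGroupType) (H K L : {set gT}) :=
  [/\ forall k l, k \in K -> l \in L -> commute k l,
      K :&: L = [set 1] &
      forall x, x \in H <-> exists k l, [/\ k \in K, l \in L & x = k * l]].

From mathcomp Require Import all_boot all_fingroup all_algebra.
Local Open Scope group_scope.
Set Implicit Arguments.
Unset Strict Implicit.

(* The only element of Sigma_n G fixing X is the identity: writing it as
   sigma g, the map g permutes the entries of X, so g = 1 by hypothesis, and
   then sigma = 1 because the entries are distinct.  Hence q |-> q X is a
   bijection from Sigma_n G onto its orbit, along which lambda and rho become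
   the left and right regular representations of Sigma_n G.  So rho is an
   injective homomorphism whose image centralizes Sigma_n G, which gives (ii),
   (iii) from Sigma_n G = Sigma_n x G, and (iv); and for every subgroup K the
   restrictions of lambda(K) and rho(K) to the orbit K X are the left and right
   regular representations of K, each the centralizer of the other, which
   gives (i). *)

Definition free_at (T : finType) (K : {set {perm T}}) (x0 : T) :=
  forall k, k \in K -> k x0 = x0 -> k = 1.

Section RegularOrbit.
Variables (T : finType) (K : {group {perm T}}) (x0 : T).
Local Notation S := (orbitX K x0).

Lemma mem_orbitX k : k \in K -> k x0 \in S.
Proof. exact: imset_f. Qed.

Lemma orbitX_refl : x0 \in S.
Proof. by apply/imsetP; exists 1; rewrite ?perm1. Qed.

Lemma astabs_orbitX k : k \in K -> k \in 'N(S | 'P).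
Proof.
move=> kK; apply/astabsP => x /=; rewrite /aperm.
apply/imsetP/imsetP => -[q qK e].
  by exists (q * k^-1); rewrite ?groupM ?groupV // permM -e permK.
by exists (q * k); rewrite ?groupM // permM e.
Qed.

Lemma restr_orbitE k y : k \in K -> y \in S -> restr_perm S k y = k y.
Proof. by move=> kK yS; rewrite restr_permE // astabs_orbitX. Qed.

Lemma restr_out p y : y \notin S -> restr_perm S p y = y.
Proof. by move=> yS; rewrite (out_perm (restr_perm_on _ _)). Qed.

Lemma perm_on_orbit_restr c p : perm_on S c -> p \in 'N(S | 'P) ->
  (forall q, q \in K -> c (q x0) = p (q x0)) -> c = restr_perm S p.
Proof.
move=> cS pN cpE; apply/permP => y.
have [/imsetP [q qK ->]|yS] := boolP (y \in S); last first.
  by rewrite restr_out // (out_perm cS).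
by rewrite restr_permE ?cpE ?mem_orbitX.
Qed.

Hypothesis Kfree : free_at K x0.

Lemma free_at_inj : {in K &, injective (fun k : {perm T} => k x0)}.
Proof.
move=> p p' pK p'K /= e; apply/eqP; rewrite eq_mulgV1; apply/eqP; apply: Kfree.
  by rewrite groupM ?groupV.
by rewrite permM e permK.
Qed.

Variable rh : {perm T} -> {perm T}.
Hypothesis rhE : forall k q, k \in K -> q \in K -> rh k (q x0) = q (k^-1 x0).

Lemma astabs_rh k : k \in K -> rh k \in 'N(S | 'P).
Proof.
move=> kK; apply/astabsP => x /=; rewrite /aperm; apply/idP/idP.
  move=> /imsetP [q qK xE].
  have: rh k ((k * q) x0) = rh k x by rewrite rhE ?groupM // permM permKV xE.
  by move/perm_inj <-; rewrite mem_orbitX ?groupM.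
by move=> /imsetP [q qK ->]; rewrite rhE // -permM mem_orbitX // groupM ?groupV.
Qed.

Lemma restr_rhE k q : k \in K -> q \in K -> restr_perm S (rh k) (q x0) = q (k^-1 x0).
Proof. by move=> kK qK; rewrite restr_permE ?astabs_rh ?mem_orbitX ?rhE. Qed.

Local Notation A := (restr_perm S @: K).
Local Notation B := (restr_perm S @: (rh @: K)).

Lemma mem_restr_rhP b : reflect (exists2 k, k \in K & b = restr_perm S (rh k)) (b \in B).
Proof.
apply: (iffP imsetP) => [[r /imsetP [k kK ->] ->]|[k kK ->]]; first by exists k.
by exists (rh k); rewrite ?imset_f.
Qed.

Lemma restr_rh_commute k k' : k \in K -> k' \in K ->
  commute (restr_perm S k) (restr_perm S (rh k')).
Proof.
move=> kK k'K; apply/permP => y; rewrite !permM.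
have [/imsetP [q qK ->]|yS] := boolP (y \in S); last by rewrite !restr_out.
rewrite (restr_orbitE kK (mem_orbitX qK)) -(permM q k) !restr_rhE ?groupM //.
by rewrite restr_orbitE ?permM // -permM mem_orbitX // groupM ?groupV.
Qed.

Lemma simply_transitive_restr : simply_transitive S A.
Proof.
move=> _ _ /imsetP [q qK ->] /imsetP [q' q'K ->].
have qq'K : q^-1 * q' \in K by rewrite groupM ?groupV.
exists (restr_perm S (q^-1 * q')); split.
  by rewrite imset_f // restr_orbitE ?mem_orbitX // permM permK.
move=> _ [/imsetP [k kK ->]]; rewrite restr_orbitE ?mem_orbitX // -permM.
by move/(free_at_inj (groupM qK kK) q'K) <-; rewrite mulKg.
Qed.

Lemma simply_transitive_restr_rh : simply_transitive S B.
Proof.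
move=> _ _ /imsetP [q qK ->] /imsetP [q' q'K ->].
have qq'K : q * q'^-1 \in K by rewrite groupM ?groupV.
exists (restr_perm S (rh (q * q'^-1))); split.
  split; first by apply/mem_restr_rhP; exists (q * q'^-1).
  by rewrite restr_rhE // invMg invgK permM permKV.
move=> _ [/mem_restr_rhP [k kK ->]]; rewrite restr_rhE // -permM.
move/(free_at_inj (groupM (groupVr kK) qK) q'K) <-.
by rewrite invMg invgK mulKVg.
Qed.

Lemma cent_restr : 'C_(Sym S)(A) = B.
Proof.
apply/setP => c; rewrite !inE; apply/andP/mem_restr_rhP => [[cS /centP cA]|].
  have /imsetP [q0 q0K c_x0] : c x0 \in S by rewrite (perm_closed _ cS) orbitX_refl.
  exists q0^-1; rewrite ?groupV //.
  apply: perm_on_orbit_restr; rewrite ?astabs_rh ?groupV // => q qK.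
  have := congr1 (fun p : {perm T} => p x0) (cA _ (imset_f _ qK)).
  by rewrite /= !permM c_x0 !restr_orbitE ?mem_orbitX ?orbitX_refl // rhE ?groupV // invgK => <-.
move=> [k kK ->]; split; first by rewrite restr_perm_on.
by apply/centP => _ /imsetP [k' k'K ->]; apply/esym/restr_rh_commute.
Qed.

Lemma cent_restr_rh : 'C_(Sym S)(B) = A.
Proof.
apply/setP => c; rewrite !inE; apply/andP/imsetP => [[cS /centP cB]|].
  have /imsetP [q0 q0K c_x0] : c x0 \in S by rewrite (perm_closed _ cS) orbitX_refl.
  exists q0 => //; apply: perm_on_orbit_restr; rewrite ?astabs_orbitX // => q qK.
  have rh_x0 : restr_perm S (rh q^-1) x0 = q x0.
    by have := restr_rhE (groupVr qK) (group1 K); rewrite !perm1 invgK.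
  have := congr1 (fun p : {perm T} => p x0) (cB _ (imset_f _ (imset_f _ (groupVr qK)))).
  by rewrite /= !permM rh_x0 c_x0 restr_rhE ?groupV // invgK => <-.
move=> [k kK ->]; split; first by rewrite restr_perm_on.
by apply/centP => _ /mem_restr_rhP [k' k'K ->]; apply: restr_rh_commute.
Qed.

Theorem dual_group_restr : dual_group S A B.
Proof.
split.
- by apply/subsetP => _ /imsetP [k _ ->]; rewrite inE restr_perm_on.
- by apply/subsetP => _ /mem_restr_rhP [k _ ->]; rewrite inE restr_perm_on.
- exact: simply_transitive_restr.
- exact: simply_transitive_restr_rh.
- by rewrite cent_restr cent_restr_rh.
Qed.

End RegularOrbit.

Lemma int_dprod_morph (gT rT : finGroupType) (H K L : {group gT}) (f : gT -> rT) :
  {in H &, {morph f : x y / x * y}} -> {in H &, injective f} ->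
  K \subset 'C(L) -> K :&: L = 1 -> K * L = H ->
  int_dprod (f @: H) (f @: K) (f @: L).
Proof.
move=> fM f_inj cKL tiKL KL_H.
have /subsetP sKH : K \subset H by rewrite -KL_H mulG_subl.
have /subsetP sLH : L \subset H by rewrite -KL_H mulG_subr.
have f1 : f 1 = 1 by apply: (mulgI (f 1)); rewrite -fM ?group1 // !mulg1.
split.
- move=> _ _ /imsetP [k kK ->] /imsetP [l lL ->].
  have [kH lH] := (sKH k kK, sLH l lL).
  by rewrite /commute -!fM // (centsP cKL k kK l lL).
- apply/setP => x; rewrite in_set1; apply/setIP/eqP => [[]|->]; last first.
    by rewrite -f1 !imset_f.
  move=> /imsetP [k kK ->] /imsetP [l lL kl].
  have kl' : k = l := f_inj k l (sKH k kK) (sLH l lL) kl.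
  suff /set1P -> : k \in [1] by [].
  by rewrite -tiKL inE kK kl' lL.
- move=> x; split.
    rewrite -KL_H => /imsetP [_ /imset2P [k l kK lL ->] ->].
    by exists (f k), (f l); rewrite !imset_f // (fM _ _ (sKH k kK) (sLH l lL)).
  move=> [_ [_ [/imsetP [k kK ->] /imsetP [l lL ->] ->]]].
  by rewrite -(fM _ _ (sKH k kK) (sLH l lL)) imset_f // -KL_H imset2_f.
Qed.

Section Actions.
Variable n : nat.

Lemma sigma_actE (s : 'S_n) (y : tup n) i : sigma_act s y i = y (s^-1 i).
Proof. by rewrite permE ffunE. Qed.

Lemma aff_actE f (y : tup n) i : aff_act n f y i = f (y i).
Proof. by rewrite permE ffunE. Qed.

Lemma sigma_actM (s t : 'S_n) : sigma_act (s * t) = sigma_act s * sigma_act t.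
Proof. by apply/permP => y; apply/ffunP => i; rewrite permM !sigma_actE invMg permM. Qed.

Lemma sigma_act1 : sigma_act (1 : 'S_n) = 1.
Proof. by apply/permP => y; apply/ffunP => i; rewrite sigma_actE invg1 !perm1. Qed.

Lemma aff_actM f g : aff_act n (f * g) = aff_act n f * aff_act n g.
Proof. by apply/permP => y; apply/ffunP => i; rewrite permM !aff_actE permM. Qed.

Lemma aff_act1 : aff_act n 1 = 1.
Proof. by apply/permP => y; apply/ffunP => i; rewrite aff_actE !perm1. Qed.

Lemma sigma_aff_act_commute (s : 'S_n) f : commute (sigma_act s) (aff_act n f).
Proof. by apply/permP => y; apply/ffunP => i; rewrite !permM !(sigma_actE, aff_actE). Qed.

Lemma group_set_SigmaS : group_set (SigmaS n).
Proof.
apply/group_setP; split; first by rewrite -sigma_act1 imset_f.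
by move=> _ _ /imsetP [s _ ->] /imsetP [t _ ->]; rewrite -sigma_actM imset_f.
Qed.
Canonical SigmaS_group := Group group_set_SigmaS.

Variable G : {group {perm 'Z_12}}.

Lemma group_set_Gt : group_set (Gt n G).
Proof.
apply/group_setP; split; first by rewrite -aff_act1 imset_f.
by move=> _ _ /imsetP [f fG ->] /imsetP [g gG ->]; rewrite -aff_actM imset_f ?groupM.
Qed.
Canonical Gt_group := Group group_set_Gt.

Lemma SigmaS_sub_cent_Gt : SigmaS n \subset 'C(Gt n G).
Proof.
apply/centsP => _ /imsetP [s _ ->] _ /imsetP [f _ ->].
exact: sigma_aff_act_commute.
Qed.

Lemma SigmaG_mulg : SigmaS n * Gt n G = SigmaG n G.
Proof. by rewrite -(comm_joingE (centC SigmaS_sub_cent_Gt)). Qed.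

Lemma SigmaS_sub : SigmaS n \subset SigmaG n G.
Proof. exact: sub_gen (subsetUl _ _). Qed.

Lemma Gt_sub : Gt n G \subset SigmaG n G.
Proof. exact: sub_gen (subsetUr _ _). Qed.

End Actions.

Section Freeness.
Variables (n : nat) (X : tup n) (G : {group {perm 'Z_12}}).
Hypothesis Xinj : injective X.
Hypothesis HG : forall f, f \in G -> f != 1 ->
  [set f x | x in [set X i | i : 'I_n]] != [set X i | i : 'I_n].

Lemma stab_entries_eq1 f : f \in G -> (forall i, exists j, f (X i) = X j) -> f = 1.
Proof.
move=> fG fX; apply/eqP; apply: contraT => /(HG fG) /negP[].
rewrite eqEcard (card_imset _ (@perm_inj _ f)) leqnn andbT.
by apply/subsetP => _ /imsetP [_ /imsetP [i _ ->] ->]; have [j ->] := fX i; rewrite imset_f.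
Qed.

Lemma sigma_aff_fix_eq1 (s : 'S_n) f :
  f \in G -> aff_act n f (sigma_act s X) = X -> s = 1 /\ f = 1.
Proof.
move=> fG fsX.
have fX i : f (X (s^-1 i)) = X i.
  by have := congr1 (fun y : tup n => y i) fsX; rewrite /= aff_actE sigma_actE.
have f1 : f = 1.
  by apply: stab_entries_eq1 => // j; exists (s j); rewrite -{1}(permK s j) fX.
split=> //; move: fsX; rewrite f1 aff_act1 perm1 => sX.
apply: invg_inj; apply/permP => i; rewrite invg1 perm1; apply: Xinj.
by have := congr1 (fun y : tup n => y i) sX; rewrite /= sigma_actE.
Qed.

Lemma free_at_SigmaG : free_at (SigmaG n G) X.
Proof.
move=> q; rewrite -SigmaG_mulg => /imset2P [_ _ /imsetP [s _ ->] /imsetP [f fG ->] ->].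
by rewrite permM => /sigma_aff_fix_eq1 [] // -> ->; rewrite sigma_act1 aff_act1 mulg1.
Qed.

Lemma SigmaS_Gt_trivI : SigmaS n :&: Gt n G = 1.
Proof.
apply/trivgP/subsetP => _ /setIP [/imsetP [s _ ->] /imsetP [f fG sf]].
have [s1 _] : s^-1 = 1 /\ f = 1.
  by apply: sigma_aff_fix_eq1 => //; rewrite -sf -permM -sigma_actM mulVg sigma_act1 perm1.
by rewrite -[s]invgK s1 invg1 sigma_act1 group1.
Qed.

End Freeness.

Section Rho.
Variables (n : nat) (X : tup n) (G : {group {perm 'Z_12}}).
Hypothesis Hfree : free_at (SigmaG n G) X.
Local Notation H := (SigmaG n G).
Local Notation O := (orbitX H X).

Lemma rho_funE p q : q \in H -> rho_fun G X p (q X) = q (p^-1 X).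
Proof.
move=> qH; rewrite /rho_fun; case: pickP => [q' /andP [q'H /eqP q'X]|/(_ q)].
  by rewrite (free_at_inj Hfree q'H qH q'X).
by rewrite qH eqxx.
Qed.

Lemma rho_fun_out p y : y \notin O -> rho_fun G X p y = y.
Proof.
move=> yO; rewrite /rho_fun; case: pickP => [q /andP [qH /eqP qX]|//].
by case/negP: yO; rewrite -qX imset_f.
Qed.

Lemma rho_fun_inj p : p \in H -> injective (rho_fun G X p).
Proof.
move=> pH; have pqH q : q \in H -> p^-1 * q \in H by move=> qH; rewrite groupM ?groupV.
move=> x y; have [/imsetP [q qH ->]|xO] := boolP (x \in O);
  have [/imsetP [q' q'H ->]|yO] := boolP (y \in O).
- by rewrite !rho_funE // -!permM => /(free_at_inj Hfree (pqH q qH) (pqH q' q'H))/mulgI ->.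
- by rewrite rho_funE // rho_fun_out // => yE; case/negP: yO; rewrite -yE -permM imset_f ?pqH.
- by rewrite rho_funE // rho_fun_out // => xE; case/negP: xO; rewrite xE -permM imset_f ?pqH.
- by rewrite !rho_fun_out.
Qed.

Lemma rho_eq p : p \in H -> rho G X p =1 rho_fun G X p.
Proof.
move=> pH y; rewrite /rho; case: injectiveP => [f_inj|]; first by rewrite permE.
by case; apply: rho_fun_inj.
Qed.

Lemma rhoE p q : p \in H -> q \in H -> rho G X p (q X) = q (p^-1 X).
Proof. by move=> pH qH; rewrite rho_eq // rho_funE. Qed.

Lemma rho_out p y : p \in H -> y \notin O -> rho G X p y = y.
Proof. by move=> pH yO; rewrite rho_eq // rho_fun_out. Qed.

Lemma rhoM : {in H &, {morph rho G X : p q / p * q}}.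
Proof.
move=> p p' pH p'H; apply/permP => y; rewrite permM.
have [/imsetP [q qH ->]|yO] := boolP (y \in O); last by rewrite !rho_out ?groupM.
rewrite !rhoE ?groupM // -(permM p^-1 q) rhoE ?groupM ?groupV //.
by rewrite invMg !permM.
Qed.

Lemma rho_inj : {in H &, injective (rho G X)}.
Proof.
move=> p p' pH p'H /(congr1 (fun r : {perm _} => r X)).
rewrite -{2 4}[X]perm1 !rhoE ?group1 // !perm1.
by move/(free_at_inj Hfree (groupVr pH) (groupVr p'H))/invg_inj.
Qed.

Lemma rho_commute p q : p \in H -> q \in H -> commute (rho G X p) q.
Proof.
move=> pH qH; apply/permP => y; rewrite !permM.
have [/imsetP [r rH ->]|yO] := boolP (y \in O).
  by rewrite (rhoE pH rH) -(permM r q X) rhoE ?groupM // permM.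
rewrite !rho_out //; apply: contra yO => /imsetP [r rH qyE].
by rewrite -[y](permK q) qyE -permM imset_f // groupM ?groupV.
Qed.

Lemma dual_group_rho (K : {group {perm tup n}}) : K \subset H ->
  dual_group (orbitX K X) (restr_perm (orbitX K X) @: K)
    (restr_perm (orbitX K X) @: (rho G X @: K)).
Proof.
move=> /subsetP sKH; apply: dual_group_restr.
  by move=> k kK; apply: Hfree; rewrite sKH.
by move=> k q kK qK; rewrite rhoE ?sKH.
Qed.

End Rho.

Theorem theorem3p2 (n : nat) (X : tup n) (G : {group {perm 'Z_12}}) :
  injective X ->
  G \subset Aff ->
  (forall f, f \in G -> f != 1 ->
     [set f x | x in [set X i | i : 'I_n]] != [set X i | i : 'I_n]) ->
  (forall p, p \in SigmaG n G -> injective (rho_fun G X p)) /\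
  (* (i) *)
  dual_group (orbitX (SigmaS n) X)
    (restr_perm (orbitX (SigmaS n) X) @: SigmaS n)
    (restr_perm (orbitX (SigmaS n) X) @: (rho G X @: SigmaS n)) /\
  dual_group (orbitX (Gt n G) X)
    (restr_perm (orbitX (Gt n G) X) @: Gt n G)
    (restr_perm (orbitX (Gt n G) X) @: (rho G X @: Gt n G)) /\
  (* (ii) *)
  (forall nu h, nu \in SigmaS n -> h \in Gt n G ->
     rho G X nu * rho G X h = rho G X h * rho G X nu) /\
  (* (iii) *)
  int_dprod (rho G X @: SigmaG n G) (rho G X @: SigmaS n) (rho G X @: Gt n G) /\
  (* (iv) *)
  (forall (s : 'S_n) (h : {perm 'Z_12}) (Y : tup n),
     h \in G -> Y \in [set sigma_act s (aff_act n g X) | g in G] ->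
     rho G X (aff_act n h) Y =
       sigma_act s (rho G X (aff_act n h) ((sigma_act s)^-1 Y))).
Proof.
move=> Xinj _ HG; have Hfree := free_at_SigmaG Xinj HG.
have SigmaSH := subsetP (SigmaS_sub n G); have GtH := subsetP (Gt_sub n G).
have rho_dprod : int_dprod (rho G X @: SigmaG n G) (rho G X @: SigmaS n) (rho G X @: Gt n G).
  apply: int_dprod_morph (rhoM Hfree) (rho_inj Hfree) (SigmaS_sub_cent_Gt n G) _ _.
    exact: SigmaS_Gt_trivI Xinj HG.
  exact: SigmaG_mulg.
have [rho_cent _ _] := rho_dprod.
split; first by move=> p; apply: rho_fun_inj.
split; first exact: dual_group_rho (SigmaS_sub n G).
split; first exact: dual_group_rho (Gt_sub n G).
split; first by move=> nu h nuS hG; apply: rho_cent; rewrite imset_f.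
(* (iv) holds for every Y, since rho(h) commutes with sigma. *)
split=> // s h Y hG _.
have sH : sigma_act s \in SigmaG n G by rewrite SigmaSH ?imset_f.
by rewrite -permM (rho_commute Hfree (GtH _ (imset_f _ hG)) sH) permM permKV.
Qed.
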